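(* Consider the $(a,b,c)$ model with $a\le b\le c$ positive integers. There are constants $\kappa$ and $\lambda$, depending only on $a,b,c$, such that the following holds: if the cube $[0,l]^3$ is internally spanned, then for every $k\in[1,\frac{l-\lambda}{\kappa}]$ there is a rectangular block (contained in $[0,l]^3$) whose longest side has length in $[k,\kappa k+\lambda]$ and which is weakly crossed.
   Context: The $(a,b,c)$ model: the neighborhood of $(x,y,z)\in\mathbb Z^3$ consists of $(x\pm i,y,z)$, $1\le i\le a$; $(x,y\pm j,z)$, $1\le j\le b$; $(x,y,z\pm k)$, $1\le k\le c$. Given an initial set of occupied sites, the bootstrap rule repeatedly occupies every empty site having at least $a+b+c$ occupied sites in its neighborhood, until no change. A cube is internally spanned if running the bootstrap rule using only the initially occupied sites inside it results in all its sites being occupied. Weak enhancement of a set of sites $\rho$: (1) evolve by the $(a,b,c)$ bootstrap rule, taking into account only occupied sites in $\rho$; (2) then, for every site that became occupied (was initially empty), draw line segments from it to each site in its neighborhood that is occupied in the final configuration, and additionally occupy every empty site crossed by at least one such segment (such sites are called weakly spanned). A rectangular block is weakly crossed if, after weakly enhancing it, it is internally crossed in every direction, i.e. for each of the three coordinate directions there is a path of occupied sites connecting the two opposite faces of the block orthogonal to that direction. *)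

From Stdlib Require Import ZArith List.
Import ListNotations.
Open Scope Z_scope.

Definition site : Type := (Z * Z * Z)%type.

Definition add (p q : site) : site :=
  let '(x1, y1, z1) := p in let '(x2, y2, z2) := q in (x1 + x2, y1 + y2, z1 + z2).

Definition scale (m : Z) (e : site) : site :=
  let '(x, y, z) := e in (m * x, m * y, m * z).

Definition cx (p : site) : Z := let '(x, _, _) := p in x.
Definition cy (p : site) : Z := let '(_, y, _) := p in y.
Definition cz (p : site) : Z := let '(_, _, z) := p in z.

Definition unit_dir (e : site) : Prop :=
  e = (1, 0, 0) \/ e = (-1, 0, 0) \/ e = (0, 1, 0) \/ e = (0, -1, 0)
  \/ e = (0, 0, 1) \/ e = (0, 0, -1).

Definition nbr (a b c : nat) (p q : site) : Prop :=
     (exists i, 1 <= Z.abs i <= Z.of_nat a /\ q = add p (i, 0, 0))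
  \/ (exists j, 1 <= Z.abs j <= Z.of_nat b /\ q = add p (0, j, 0))
  \/ (exists k, 1 <= Z.abs k <= Z.of_nat c /\ q = add p (0, 0, k)).

(* This is the final configuration of the (possibly infinite)
   dynamics on Z^3, i.e. the least set containing A and stable under the rule. *)
Inductive closure (a b c : nat) (A : site -> Prop) : site -> Prop :=
| cl_init : forall x, A x -> closure a b c A x
| cl_step : forall x (l : list site),
    NoDup l -> (a + b + c <= length l)%nat ->
    (forall y, In y l -> nbr a b c x y /\ closure a b c A y) ->
    closure a b c A x.

Record block := Block { bx1 : Z; bx2 : Z; by1 : Z; by2 : Z; bz1 : Z; bz2 : Z }.

Definition valid_block (B : block) : Prop :=
  bx1 B <= bx2 B /\ by1 B <= by2 B /\ bz1 B <= bz2 B.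

Definition in_block (B : block) (s : site) : Prop :=
  bx1 B <= cx s <= bx2 B /\ by1 B <= cy s <= by2 B /\ bz1 B <= cz s <= bz2 B.

Definition block_sub (B C : block) : Prop :=
  bx1 C <= bx1 B /\ bx2 B <= bx2 C /\ by1 C <= by1 B /\ by2 B <= by2 C
  /\ bz1 C <= bz1 B /\ bz2 B <= bz2 C.

Definition cube (l : nat) : block :=
  Block 0 (Z.of_nat l) 0 (Z.of_nat l) 0 (Z.of_nat l).

(* Side lengths: the side [x1,x2] has length x2 - x1 (so [0,l] has length l). *)
Definition longest_side (B : block) : Z :=
  Z.max (bx2 B - bx1 B) (Z.max (by2 B - by1 B) (bz2 B - bz1 B)).

Definition restrict (A : site -> Prop) (B : block) : site -> Prop :=
  fun s => A s /\ in_block B s.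

Definition internally_spanned (a b c : nat) (A : site -> Prop) (B : block) : Prop :=
  forall s, in_block B s -> closure a b c (restrict A B) s.

Definition on_segment (p q s : site) : Prop :=
  exists e n m, unit_dir e /\ q = add p (scale n e) /\ s = add p (scale m e)
                /\ 0 < m < n.

Definition weakly_spanned (a b c : nat) (rho : site -> Prop) (s : site) : Prop :=
  exists x y, closure a b c rho x /\ ~ rho x /\ nbr a b c x y
              /\ closure a b c rho y /\ on_segment x y s.

Definition weak_enhancement (a b c : nat) (rho : site -> Prop) : site -> Prop :=
  fun s => closure a b c rho s \/ weakly_spanned a b c rho s.

Definition adjacent (s t : site) : Prop := exists e, unit_dir e /\ t = add s e.

Fixpoint nn_path (P : site -> Prop) (s : site) (l : list site) : Prop :=
  match l with
  | nil => True
  | t :: l' => adjacent s t /\ P t /\ nn_path P t l'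
  end.

Definition crosses (P : site -> Prop) (coord : site -> Z) (lo hi : Z) : Prop :=
  exists s l, P s /\ nn_path P s l /\ coord s = lo /\ coord (last l s) = hi.

Definition internally_crossed (E : site -> Prop) (B : block) : Prop :=
  let P := fun s => E s /\ in_block B s in
  crosses P cx (bx1 B) (bx2 B) /\ crosses P cy (by1 B) (by2 B)
  /\ crosses P cz (bz1 B) (bz2 B).

Definition weakly_crossed (a b c : nat) (A : site -> Prop) (B : block) : Prop :=
  internally_crossed (weak_enhancement a b c (restrict A B)) B.

From Stdlib Require Import ZArith List Lia Classical Wf_nat.
Open Scope Z_scope.

(* Take kappa = 2 and lambda = 2c and suppose that no block of [0,l]^3 whose longest side lies
   in [k, 2k + 2c] is weakly crossed.  A connected set of sites lying in the weak enhancement of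
   its bounding box makes that box weakly crossed, so such a cluster of diameter at most
   2k + 2c has side < k.  Following the bootstrap dynamics, every site occupied in the cube lies
   in a cluster of side < k: for a newly occupied site x, the clusters of its occupied
   neighbours together with the axis-parallel segments from x to them form a connected set
   within distance c + k of x, in which x is occupied and the segment points are weakly
   spanned.  Since the cube is internally spanned, these clusters cover it, and merging the
   clusters of adjacent sites makes one grow until its width reaches k, a contradiction. *)

(** * Geometry of sites and blocks *)

Lemma add_scale0 (x e : site) : add x (scale 0 e) = x.
Proof. destruct x as [[? ?] ?], e as [[? ?] ?]; simpl; f_equal; [f_equal|]; lia. Qed.

Lemma ray_nodup_length (x d : site) (n : nat) (l : list site) : NoDup l ->
  (forall y, In y l -> exists i, 1 <= i <= Z.of_nat n /\ y = add x (scale i d)) ->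
  (length l <= n)%nat.
Proof.
  intros Hnd Hray.
  set (ray := map (fun i : nat => add x (scale (Z.of_nat i + 1) d)) (seq 0 n)).
  replace n with (length ray) by (unfold ray; now rewrite length_map, length_seq).
  apply (NoDup_incl_length Hnd). intros y Hy.
  destruct (Hray y Hy) as [i [Hi ->]]. apply in_map_iff.
  exists (Z.to_nat (i - 1)). split.
  - f_equal. f_equal. lia.
  - apply in_seq. lia.
Qed.

Lemma outside_block_direction (B : block) (x : site) : ~ in_block B x ->
  exists d, forall e n, unit_dir e -> 1 <= n -> in_block B (add x (scale n e)) -> e = d.
Proof.
  destruct x as [[x1 x2] x3], B as [p1 p2 q1 q2 r1 r2]; unfold in_block; simpl; intros Hout.
  assert (x1 < p1 \/ p2 < x1 \/ x2 < q1 \/ q2 < x2 \/ x3 < r1 \/ r2 < x3)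
    as [H|[H|[H|[H|[H|H]]]]] by lia;
  [exists (1,0,0)|exists (-1,0,0)|exists (0,1,0)|exists (0,-1,0)|exists (0,0,1)|exists (0,0,-1)];
  intros e n [-> | [-> | [-> | [-> | [-> | ->]]]]] Hn Hin; simpl in Hin;
  solve [reflexivity | lia].
Qed.

Definition near (R : Z) (p s : site) : Prop :=
  Z.abs (cx s - cx p) <= R /\ Z.abs (cy s - cy p) <= R /\ Z.abs (cz s - cz p) <= R.

Lemma near_refl R p : 0 <= R -> near R p p.
Proof. unfold near; lia. Qed.

Lemma near_trans R1 R2 p q s : near R1 p q -> near R2 q s -> near (R1 + R2) p s.
Proof. unfold near; lia. Qed.

Lemma near_le R1 R2 p s : R1 <= R2 -> near R1 p s -> near R2 p s.
Proof. unfold near; lia. Qed.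

Lemma adjacent_near s t : adjacent s t -> near 1 s t.
Proof.
  intros [e [He ->]]. destruct s as [[x y] z].
  destruct He as [-> | [-> | [-> | [-> | [-> | ->]]]]]; unfold near; simpl; lia.
Qed.

Lemma in_block_near B s t : in_block B s -> in_block B t -> near (longest_side B) s t.
Proof. unfold in_block, near, longest_side; lia. Qed.

Lemma width_le_longest_side B : bx2 B - bx1 B <= longest_side B.
Proof. unfold longest_side; lia. Qed.

Lemma adjacent_sym s t : adjacent s t -> adjacent t s.
Proof.
  intros [e [He ->]]. destruct s as [[x y] z].
  destruct He as [-> | [-> | [-> | [-> | [-> | ->]]]]];
  [exists (-1,0,0)|exists (1,0,0)|exists (0,-1,0)|exists (0,1,0)|exists (0,0,-1)|exists (0,0,1)];
  unfold unit_dir; simpl; (split; [tauto | f_equal; [f_equal|]; lia]).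
Qed.

Definition segment (x y s : site) : Prop :=
  exists e n m, unit_dir e /\ y = add x (scale n e) /\ s = add x (scale m e) /\ 0 <= m <= n.

Lemma segment_in_block B x y s : in_block B x -> in_block B y -> segment x y s -> in_block B s.
Proof.
  intros Hx Hy [e [n [m [He [-> [-> Hm]]]]]]. destruct x as [[x1 x2] x3].
  destruct He as [-> | [-> | [-> | [-> | [-> | ->]]]]]; unfold in_block in *; simpl in *; lia.
Qed.

Lemma segment_near R x y s : near R x y -> segment x y s -> near R x s.
Proof.
  intros Hy [e [n [m [He [-> [-> Hm]]]]]]. destruct x as [[x1 x2] x3].
  destruct He as [-> | [-> | [-> | [-> | [-> | ->]]]]]; unfold near in *; simpl in *; lia.
Qed.

Definition inside (S : site -> Prop) (B : block) : Prop := forall s, S s -> in_block B s.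

Definition faces (S : site -> Prop) (B : block) : Prop :=
  (exists s, S s /\ cx s = bx1 B) /\ (exists s, S s /\ cx s = bx2 B) /\
  (exists s, S s /\ cy s = by1 B) /\ (exists s, S s /\ cy s = by2 B) /\
  (exists s, S s /\ cz s = bz1 B) /\ (exists s, S s /\ cz s = bz2 B).

Definition hull (S : site -> Prop) (B : block) : Prop := inside S B /\ faces S B.

Lemma faces_block_sub S B H : faces S B -> inside S H -> block_sub B H.
Proof.
  intros [[s1 [S1 E1]] [[s2 [S2 E2]] [[s3 [S3 E3]] [[s4 [S4 E4]] [[s5 [S5 E5]] [s6 [S6 E6]]]]]]] HH.
  pose proof (HH _ S1); pose proof (HH _ S2); pose proof (HH _ S3);
  pose proof (HH _ S4); pose proof (HH _ S5); pose proof (HH _ S6).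
  unfold in_block, block_sub in *. lia.
Qed.

Lemma longest_side_le B K : bx2 B - bx1 B <= K -> by2 B - by1 B <= K -> bz2 B - bz1 B <= K ->
  longest_side B <= K.
Proof. intros. unfold longest_side. repeat apply Z.max_lub; assumption. Qed.

Lemma faces_longest_side S B R p : faces S B -> (forall s, S s -> near R p s) ->
  longest_side B <= 2 * R.
Proof.
  intros [[s1 [S1 E1]] [[s2 [S2 E2]] [[s3 [S3 E3]] [[s4 [S4 E4]] [[s5 [S5 E5]] [s6 [S6 E6]]]]]]] HR.
  destruct (HR _ S1) as [N1 _], (HR _ S2) as [N2 _], (HR _ S3) as [_ [N3 _]],
    (HR _ S4) as [_ [N4 _]], (HR _ S5) as [_ [_ N5]], (HR _ S6) as [_ [_ N6]].
  apply Z.abs_le in N1, N2, N3, N4, N5, N6.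
  apply longest_side_le;
    [rewrite <- E1, <- E2 | rewrite <- E3, <- E4 | rewrite <- E5, <- E6]; lia.
Qed.

Lemma bounded_has_max (P : Z -> Prop) (M : Z) : (exists z, P z) -> (forall z, P z -> z <= M) ->
  exists m, P m /\ forall z, P z -> z <= m.
Proof.
  intros [z0 Hz0] HM.
  destruct (dec_inh_nat_subset_has_unique_least_element (fun n => P (M - Z.of_nat n)))
    as [n [[Pn Hn] _]].
  - intros n. apply classic.
  - exists (Z.to_nat (M - z0)). specialize (HM _ Hz0).
    replace (M - Z.of_nat (Z.to_nat (M - z0))) with z0 by lia. exact Hz0.
  - exists (M - Z.of_nat n). split; [exact Pn|]. intros z Pz.
    specialize (HM _ Pz). specialize (Hn (Z.to_nat (M - z))).
    replace (M - Z.of_nat (Z.to_nat (M - z))) with z in Hn by lia. specialize (Hn Pz). lia.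
Qed.

Lemma extreme_values (S : site -> Prop) (f : site -> Z) (lo hi : Z) : (exists s, S s) ->
  (forall s, S s -> lo <= f s <= hi) ->
  exists s1 s2, S s1 /\ S s2 /\ forall s, S s -> f s1 <= f s <= f s2.
Proof.
  intros [s0 Hs0] Hb.
  destruct (bounded_has_max (fun z => exists s, S s /\ f s = z) hi) as [M [[s2 [S2 <-]] HM]].
  { eauto. }
  { intros z [s [Hs <-]]. specialize (Hb s Hs). lia. }
  destruct (bounded_has_max (fun z => exists s, S s /\ - f s = z) (- lo)) as [m [[s1 [S1 <-]] Hm]].
  { eauto. }
  { intros z [s [Hs <-]]. specialize (Hb s Hs). lia. }
  exists s1, s2. split; [|split]; auto. intros s Hs.
  specialize (HM _ (ex_intro _ s (conj Hs eq_refl))).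
  specialize (Hm _ (ex_intro _ s (conj Hs eq_refl))). lia.
Qed.

Lemma hull_exists (S : site -> Prop) (D : block) : (exists s, S s) -> inside S D ->
  exists B, hull S B.
Proof.
  intros Hne HD.
  destruct (extreme_values S cx (bx1 D) (bx2 D)) as [sx1 [sx2 [X1 [X2 Hx]]]];
    [exact Hne | intros s Hs; apply HD, Hs |].
  destruct (extreme_values S cy (by1 D) (by2 D)) as [sy1 [sy2 [Y1 [Y2 Hy]]]];
    [exact Hne | intros s Hs; apply HD, Hs |].
  destruct (extreme_values S cz (bz1 D) (bz2 D)) as [sz1 [sz2 [Z1 [Z2 Hz]]]];
    [exact Hne | intros s Hs; apply HD, Hs |].
  exists (Block (cx sx1) (cx sx2) (cy sy1) (cy sy2) (cz sz1) (cz sz2)). split.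
  - intros s Hs. unfold in_block; simpl. auto.
  - unfold faces; simpl; repeat split; eauto.
Qed.

Lemma segment_cases x y s : segment x y s -> s = x \/ s = y \/ on_segment x y s.
Proof.
  intros [e [n [m [He [Ey [Es Hm]]]]]].
  destruct (Z.eq_dec m 0) as [->|Hm0]; [left; rewrite Es; apply add_scale0|].
  destruct (Z.eq_dec m n) as [->|Hmn]; [right; left; congruence|].
  right; right. exists e, n, m. repeat split; auto; lia.
Qed.

(** * Nearest-neighbour paths *)

Inductive reach (P : site -> Prop) : site -> site -> Prop :=
| reach_refl : forall s, reach P s s
| reach_step : forall s t u, adjacent s t -> P t -> reach P t u -> reach P s u.

Lemma reach_trans P s t u : reach P s t -> reach P t u -> reach P s u.
Proof. induction 1; intros; [assumption | eapply reach_step; eauto]. Qed.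

Lemma reach_mono (P Q : site -> Prop) s t : (forall u, P u -> Q u) -> reach P s t -> reach Q s t.
Proof. intros HPQ; induction 1; [constructor | eapply reach_step; eauto]. Qed.

Lemma reach_sym P s t : P s -> reach P s t -> reach P t s.
Proof.
  intros Ps H. induction H as [|s t u Hst Pt Htu IH]; [constructor|].
  apply reach_trans with t; [now apply IH|].
  apply reach_step with s; [now apply adjacent_sym | assumption | constructor].
Qed.

Lemma last_cons_default {T : Type} (l : list T) (t d : T) : last (t :: l) d = last l t.
Proof.
  revert t d. induction l as [|u l IH]; intros t d; [reflexivity|].
  change (last (u :: l) d = last (u :: l) t). now rewrite !IH.
Qed.

Lemma reach_path P s t : reach P s t -> exists l, nn_path P s l /\ last l s = t.
Proof.
  induction 1 as [s|s t u Hst Pt _ [l [Hl Hlast]]]; [now exists nil|].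
  exists (t :: l). split; [simpl; auto|].
  now rewrite last_cons_default.
Qed.

Definition connected (S : site -> Prop) : Prop := forall u v, S u -> S v -> reach S u v.

Lemma connected_of_reach_from (S : site -> Prop) p : S p -> (forall s, S s -> reach S p s) ->
  connected S.
Proof.
  intros Sp Hp u v Su Sv. apply reach_trans with p; [apply reach_sym|]; auto.
Qed.

Lemma segment_reach (P : site -> Prop) x y s : (forall t, segment x y t -> P t) ->
  segment x y s -> reach P x s.
Proof.
  intros HP [e [n [m [He [Ey [-> Hm]]]]]].
  assert (Hray : forall j, 0 <= j -> j <= m -> reach P x (add x (scale j e))).
  { refine (natlike_ind (fun j => j <= m -> reach P x (add x (scale j e))) _ _).
    - intros _. rewrite add_scale0. constructor.
    - intros j Hj IH Hjm. apply reach_trans with (add x (scale j e)); [apply IH; lia|].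
      apply reach_step with (add x (scale (Z.succ j) e)); [| | constructor].
      + exists e. split; [assumption|].
        destruct x as [[? ?] ?], e as [[? ?] ?]; simpl; f_equal; [f_equal|]; lia.
      + apply HP. exists e, n, (Z.succ j). repeat split; auto; lia. }
  apply Hray; lia.
Qed.

(** * Bootstrap closure and clusters *)

Section Bootstrap.

Variables a b c : nat.
Hypothesis Ha : (1 <= a)%nat.
Hypothesis Hab : (a <= b)%nat.
Hypothesis Hbc : (b <= c)%nat.

(* The generated [closure_ind] has no induction hypothesis for the neighbours, which occur
   under a conjunction. *)
Fixpoint closure_induction (rho P : site -> Prop) (Hinit : forall x, rho x -> P x)
  (Hstep : forall x l, NoDup l -> (a + b + c <= length l)%nat ->
     (forall y, In y l -> nbr a b c x y /\ closure a b c rho y /\ P y) -> P x)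
  (x : site) (Hx : closure a b c rho x) {struct Hx} : P x :=
  match Hx with
  | cl_init _ _ _ _ x h => Hinit x h
  | cl_step _ _ _ _ x l nd len f =>
      Hstep x l nd len (fun y i =>
        match f y i with
        | conj n cy => conj n (conj cy (closure_induction rho P Hinit Hstep y cy))
        end)
  end.

Lemma closure_mono (rho rho' : site -> Prop) : (forall s, rho s -> rho' s) ->
  forall s, closure a b c rho s -> closure a b c rho' s.
Proof.
  intros Hsub. apply closure_induction.
  - intros x Hx. apply cl_init. auto.
  - intros x l Hnd Hlen Hl. apply (cl_step _ _ _ _ x l Hnd Hlen).
    intros y Hy. destruct (Hl y Hy) as [? [? ?]]. auto.
Qed.

Lemma nbr_on_axis x y : nbr a b c x y ->
  exists e n, unit_dir e /\ 1 <= n <= Z.of_nat c /\ y = add x (scale n e).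
Proof.
  destruct x as [[x1 x2] x3].
  intros [[i [Hi ->]]|[[i [Hi ->]]|[i [Hi ->]]]]; destruct (Z_lt_le_dec 0 i);
  [exists (1,0,0), i | exists (-1,0,0), (-i) | exists (0,1,0), i
  | exists (0,-1,0), (-i) | exists (0,0,1), i | exists (0,0,-1), (-i)];
  unfold unit_dir; simpl; (split; [tauto | split; [lia | f_equal; [f_equal|]; lia]]).
Qed.

Lemma nbr_near x y : nbr a b c x y -> near (Z.of_nat c) x y.
Proof.
  destruct x as [[x1 x2] x3].
  intros [[i [Hi ->]]|[[i [Hi ->]]|[i [Hi ->]]]]; unfold near; simpl; lia.
Qed.

Lemma nbr_segment x y : nbr a b c x y -> segment x y y.
Proof.
  intros Hxy. destruct (nbr_on_axis x y Hxy) as [e [n [He [Hn Ey]]]].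
  exists e, n, n. repeat split; auto; lia.
Qed.

(* A site outside B has all its neighbours inside B on one ray, and there are at most
   c < a + b + c of them. *)
Lemma closure_in_block (rho : site -> Prop) (B : block) : (forall s, rho s -> in_block B s) ->
  forall s, closure a b c rho s -> in_block B s.
Proof.
  intros Hrho. apply closure_induction; [exact Hrho|].
  intros x l Hnd Hlen Hl. apply NNPP. intros Hout.
  destruct (outside_block_direction B x Hout) as [d Hd].
  enough (length l <= c)%nat by lia.
  apply (ray_nodup_length x d c l Hnd). intros y Hy.
  destruct (Hl y Hy) as [Hxy [_ HyB]].
  destruct (nbr_on_axis x y Hxy) as [e [n [He [Hn ->]]]].
  exists n. split; [lia|]. rewrite (Hd e n); auto; lia.
Qed.

Lemma weak_enhancement_mono (rho rho' : site -> Prop) : (forall s, rho s -> rho' s) ->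
  (forall s, closure a b c rho s -> rho' s -> rho s) ->
  forall s, weak_enhancement a b c rho s -> weak_enhancement a b c rho' s.
Proof.
  intros Hsub Hback s [Hs | [x [y [Hx [Hnx [Hxy [Hy Hseg]]]]]]].
  - left. exact (closure_mono rho rho' Hsub s Hs).
  - right. exists x, y. split; [exact (closure_mono rho rho' Hsub x Hx)|].
    split; [intros Hx'; exact (Hnx (Hback x Hx Hx'))|].
    split; [exact Hxy|]. split; [exact (closure_mono rho rho' Hsub y Hy)|]. exact Hseg.
Qed.

Lemma restrict_block_sub (A : site -> Prop) B H : block_sub B H ->
  forall s, restrict A B s -> restrict A H s.
Proof. intros HBH s [As Bs]. split; [exact As|]. unfold in_block, block_sub in *. lia. Qed.

Lemma weak_enhancement_block_sub (A : site -> Prop) B H : block_sub B H ->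
  forall s, weak_enhancement a b c (restrict A B) s -> weak_enhancement a b c (restrict A H) s.
Proof.
  intros HBH. apply weak_enhancement_mono; [now apply restrict_block_sub|].
  intros s Hs [As _]. split; [exact As|].
  apply (closure_in_block (restrict A B)); [now intros t [_ Ht] | exact Hs].
Qed.

Section Clusters.

Variables (A : site -> Prop) (l : nat).

Definition cluster (B : block) (C : site -> Prop) : Prop :=
  connected C /\ hull C B /\ block_sub B (cube l) /\
  forall s, C s -> weak_enhancement a b c (restrict A B) s.

Lemma cluster_weakly_crossed B C : cluster B C -> valid_block B /\ weakly_crossed a b c A B.
Proof.
  intros [Hconn [[HCB Hfaces] [_ Henh]]].
  assert (Hpath : forall u v, C u -> C v -> exists p,
    nn_path (fun s => weak_enhancement a b c (restrict A B) s /\ in_block B s) u p /\ last p u = v).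
  { intros u v Cu Cv. apply reach_path. apply (reach_mono C); [|now apply Hconn].
    intros s Cs. auto. }
  destruct Hfaces as [[s1 [C1 E1]] [[s2 [C2 E2]] [[s3 [C3 E3]] [[s4 [C4 E4]] [[s5 [C5 E5]] [s6 [C6 E6]]]]]]].
  split.
  - pose proof (HCB s1 C1). unfold in_block, valid_block in *. lia.
  - unfold weakly_crossed, internally_crossed, crosses. split; [|split].
    + destruct (Hpath s1 s2 C1 C2) as [p [Hp Hlast]]. exists s1, p. rewrite Hlast. auto.
    + destruct (Hpath s3 s4 C3 C4) as [p [Hp Hlast]]. exists s3, p. rewrite Hlast. auto.
    + destruct (Hpath s5 s6 C5 C6) as [p [Hp Hlast]]. exists s5, p. rewrite Hlast. auto.
Qed.

Lemma cluster_enhanced_in B C H : cluster B C -> inside C H ->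
  forall s, C s -> weak_enhancement a b c (restrict A H) s.
Proof.
  intros [_ [[_ Hfaces] [_ Henh]]] HCH s Cs.
  apply (weak_enhancement_block_sub A B H); [exact (faces_block_sub C B H Hfaces HCH)|].
  auto.
Qed.

Definition crossed_block_exists (k : nat) : Prop :=
  exists B, valid_block B /\ block_sub B (cube l) /\
    Z.of_nat k <= longest_side B <= Z.of_nat (2 * k + 2 * c) /\ weakly_crossed a b c A B.

Section Small.

Variable k : nat.
Hypothesis no_crossed_block : ~ crossed_block_exists k.

Definition small (B : block) (C : site -> Prop) : Prop :=
  cluster B C /\ longest_side B < Z.of_nat k.

(* Occupation of s inside B is kept so that the centre of a star becomes occupied inside
   any block containing the star. *)
Definition covered (s : site) : Prop :=
  exists B C, small B C /\ C s /\ closure a b c (restrict A B) s.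

Lemma small_inside B C : small B C -> inside C B.
Proof. now intros [[_ [[HCB _] _]] _]. Qed.

Lemma small_inside_cube B C : small B C -> inside C (cube l).
Proof.
  intros [[_ [[HCB _] [HB _]]] _] s Cs. specialize (HCB s Cs).
  unfold in_block, block_sub in *. lia.
Qed.

(* The bounding box of such a set is weakly crossed and has side at most 2k + 2c, hence
   side < k. *)
Lemma small_cluster_of_set (S : site -> Prop) (p : site) (R : Z) :
  S p -> connected S -> inside S (cube l) -> (forall s, S s -> near R p s) ->
  R <= Z.of_nat (k + c) ->
  (forall H, inside S H -> forall s, S s -> weak_enhancement a b c (restrict A H) s) ->
  exists H, small H S.
Proof.
  intros Sp Hconn Hcube Hnear HR Henh.
  destruct (hull_exists S (cube l) (ex_intro _ p Sp) Hcube) as [H [HSH Hfaces]].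
  assert (Hcl : cluster H S).
  { split; [exact Hconn|]. split; [split; assumption|].
    split; [exact (faces_block_sub S H (cube l) Hfaces Hcube)|]. now apply Henh. }
  exists H. split; [exact Hcl|]. apply Z.nle_gt. intros Hbig. apply no_crossed_block.
  destruct (cluster_weakly_crossed H S Hcl) as [Hvalid Hcross].
  pose proof (faces_longest_side S H R p Hfaces Hnear).
  exists H. split; [exact Hvalid|]. split; [exact (proj1 (proj2 (proj2 Hcl)))|].
  split; [lia | exact Hcross].
Qed.

Lemma covered_initial s : A s -> in_block (cube l) s -> covered s.
Proof.
  intros As Hs.
  destruct (small_cluster_of_set (eq s) s 0) as [H HsH].
  - reflexivity.
  - intros u v <- <-. constructor.
  - now intros t <-.
  - intros t <-. now apply near_refl.
  - lia.
  - intros H HH t <-. left. apply cl_init. split; [exact As | now apply HH].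
  - exists H, (eq s). split; [exact HsH|]. split; [reflexivity|].
    apply cl_init. split; [exact As | now apply (small_inside H (eq s))].
Qed.

Section Star.

Variables (x : site) (ls : list site).
Hypothesis x_in_cube : in_block (cube l) x.
Hypothesis nbr_ls : forall y, In y ls -> nbr a b c x y.

Definition star (s : site) : Prop :=
  s = x \/ exists y B C, In y ls /\ small B C /\ C y /\ closure a b c (restrict A B) y /\
    (C s \/ segment x y s).

Lemma star_inside_cube : inside star (cube l).
Proof.
  intros s [-> | [y [B [C [Hy [HBC [Cy [_ [Cs | Hseg]]]]]]]]].
  - exact x_in_cube.
  - exact (small_inside_cube B C HBC s Cs).
  - exact (segment_in_block (cube l) x y s x_in_cube (small_inside_cube B C HBC y Cy) Hseg).
Qed.

Lemma star_near s : star s -> near (Z.of_nat (k + c)) x s.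
Proof.
  intros [-> | [y [B [C [Hy [HBC [Cy [_ [Cs | Hseg]]]]]]]]].
  - apply near_refl. lia.
  - apply near_le with (Z.of_nat c + longest_side B); [destruct HBC; lia|].
    apply near_trans with y; [exact (nbr_near x y (nbr_ls y Hy))|].
    exact (in_block_near B y s (small_inside B C HBC y Cy) (small_inside B C HBC s Cs)).
  - apply near_le with (Z.of_nat c); [lia|].
    exact (segment_near _ x y s (nbr_near x y (nbr_ls y Hy)) Hseg).
Qed.

Lemma star_connected : connected star.
Proof.
  apply (connected_of_reach_from star x); [now left|].
  intros s [-> | [y [B [C [Hy [HBC [Cy [Hcly Hs]]]]]]]]; [constructor|].
  assert (Hseg : forall t, segment x y t -> star t).
  { intros t Ht. right. exists y, B, C. tauto. }
  destruct Hs as [Cs | Hs]; [|exact (segment_reach star x y s Hseg Hs)].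
  apply reach_trans with y; [exact (segment_reach star x y y Hseg (nbr_segment x y (nbr_ls y Hy)))|].
  apply (reach_mono C); [|now apply (proj1 (proj1 HBC))].
  intros t Ct. right. exists y, B, C. tauto.
Qed.

Hypothesis x_not_initial : ~ A x.
Hypothesis ls_nodup : NoDup ls.
Hypothesis ls_length : (a + b + c <= length ls)%nat.
Hypothesis ls_covered : forall y, In y ls -> covered y.

Lemma star_arm_block_sub H y B C : inside star H -> In y ls -> small B C -> C y ->
  closure a b c (restrict A B) y -> block_sub B H.
Proof.
  intros HH Hy HBC Cy Hcly. apply (faces_block_sub C); [exact (proj2 (proj1 (proj2 (proj1 HBC))))|].
  intros t Ct. apply HH. right. exists y, B, C. tauto.
Qed.

Lemma star_center_closure H : inside star H -> closure a b c (restrict A H) x.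
Proof.
  intros HH. apply (cl_step _ _ _ _ x ls ls_nodup ls_length). intros y Hy.
  split; [exact (nbr_ls y Hy)|].
  destruct (ls_covered y Hy) as [B [C [HBC [Cy Hcly]]]].
  apply (closure_mono (restrict A B)); [|exact Hcly].
  apply restrict_block_sub. exact (star_arm_block_sub H y B C HH Hy HBC Cy Hcly).
Qed.

(* Interior points of the segments are weakly spanned: x became occupied, not initially
   occupied, and each y is an occupied neighbour of x. *)
Lemma star_enhanced H : inside star H ->
  forall s, star s -> weak_enhancement a b c (restrict A H) s.
Proof.
  intros HH s [-> | [y [B [C [Hy [HBC [Cy [Hcly Hs]]]]]]]];
    [left; exact (star_center_closure H HH)|].
  assert (HBH : block_sub B H) by exact (star_arm_block_sub H y B C HH Hy HBC Cy Hcly).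
  destruct Hs as [Cs | Hseg].
  - apply (cluster_enhanced_in B C H (proj1 HBC)); [|exact Cs].
    intros t Ct. apply HH. right. exists y, B, C. tauto.
  - assert (HclyH : closure a b c (restrict A H) y)
      by exact (closure_mono _ _ (restrict_block_sub A B H HBH) y Hcly).
    destruct (segment_cases x y s Hseg) as [-> | [-> | Hon]];
      [left; exact (star_center_closure H HH) | left; exact HclyH|].
    right. exists x, y. split; [exact (star_center_closure H HH)|].
    split; [now intros [Ax _]|]. split; [exact (nbr_ls y Hy)|]. auto.
Qed.

Lemma covered_star_center : covered x.
Proof.
  destruct (small_cluster_of_set star x (Z.of_nat (k + c))) as [H HH]; auto.
  - now left.
  - exact star_connected.
  - exact star_inside_cube.
  - exact star_near.
  - lia.
  - exact star_enhanced.
  - exists H, star. split; [exact HH|]. split; [now left|].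
    exact (star_center_closure H (small_inside H star HH)).
Qed.

End Star.

Lemma closure_covered : forall s, closure a b c (restrict A (cube l)) s -> covered s.
Proof.
  assert (Hcube : forall s, closure a b c (restrict A (cube l)) s -> in_block (cube l) s)
    by (apply closure_in_block; now intros t [_ Ht]).
  apply closure_induction; [intros s [As Hs]; exact (covered_initial s As Hs)|].
  intros x ls Hnd Hlen Hls.
  assert (Hx : in_block (cube l) x).
  { apply Hcube, (cl_step _ _ _ _ x ls Hnd Hlen). intros y Hy.
    now destruct (Hls y Hy) as [? [? _]]. }
  destruct (classic (A x)) as [Ax | nAx]; [exact (covered_initial x Ax Hx)|].
  apply (covered_star_center x ls); auto; intros y Hy; now destruct (Hls y Hy) as [? [? ?]].
Qed.

Lemma small_cluster_union B C B' C' s s' : small B C -> small B' C' -> C s -> C' s' ->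
  adjacent s s' -> exists H, small H (fun t => C t \/ C' t).
Proof.
  intros HBC HBC' Cs Cs' Hss'.
  apply (small_cluster_of_set _ s (Z.of_nat k + 1)).
  - now left.
  - apply (connected_of_reach_from _ s); [now left|].
    intros t [Ct | Ct].
    + apply (reach_mono C); [now left | now apply (proj1 (proj1 HBC))].
    + apply reach_step with s'; [exact Hss' | now right|].
      apply (reach_mono C'); [now right | now apply (proj1 (proj1 HBC'))].
  - intros t [Ct | Ct]; [exact (small_inside_cube B C HBC t Ct) | exact (small_inside_cube B' C' HBC' t Ct)].
  - intros t [Ct | Ct].
    + apply near_le with (longest_side B); [destruct HBC; lia|].
      exact (in_block_near B s t (small_inside B C HBC s Cs) (small_inside B C HBC t Ct)).
    + apply near_le with (1 + longest_side B'); [destruct HBC'; lia|].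
      apply near_trans with s'; [exact (adjacent_near s s' Hss')|].
      exact (in_block_near B' s' t (small_inside B' C' HBC' s' Cs') (small_inside B' C' HBC' t Ct)).
  - lia.
  - intros H HH t [Ct | Ct].
    + apply (cluster_enhanced_in B C H (proj1 HBC)); [|exact Ct]. intros u Cu. apply HH. now left.
    + apply (cluster_enhanced_in B' C' H (proj1 HBC')); [|exact Ct]. intros u Cu. apply HH. now right.
Qed.

Lemma small_cluster_extend B C s s' : small B C -> C s -> adjacent s s' -> covered s' ->
  exists H C', small H C' /\ inside C H /\ in_block H s'.
Proof.
  intros HBC Cs Hss' [B' [C' [HBC' [Cs' _]]]].
  destruct (small_cluster_union B C B' C' s s' HBC HBC' Cs Cs' Hss') as [H HH].
  exists H, (fun t => C t \/ C' t). split; [exact HH|].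
  split; [intros t Ct | ]; apply (small_inside H _ HH); auto.
Qed.

(* Merging with the cluster of a site just beyond its left or right face, a small cluster
   grows in the x-direction; the cube is wide enough that one of the two sites exists. *)
Lemma small_cluster_of_width : (2 * k + 2 * c <= l)%nat ->
  (forall s, in_block (cube l) s -> covered s) ->
  forall n : nat, (n <= k)%nat -> exists B C, small B C /\ Z.of_nat n <= bx2 B - bx1 B.
Proof.
  intros Hl Hcover. induction n as [|n IH]; intros Hn.
  - destruct (Hcover (0,0,0)) as [B [C [HBC [C0 _]]]]; [unfold in_block, cube; simpl; lia|].
    exists B, C. split; [exact HBC|]. pose proof (small_inside B C HBC _ C0).
    unfold in_block in *. lia.
  - destruct (IH ltac:(lia)) as [B [C [HBC Hw]]].
    destruct (Z_le_gt_dec (Z.of_nat (S n)) (bx2 B - bx1 B)) as [Hw' | Hw']; [now exists B, C|].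
    pose proof HBC as [[_ [[_ [[s1 [C1 E1]] [[s2 [C2 E2]] _]]] [Hsub _]]] Hside].
    pose proof (width_le_longest_side B) as HwB.
    pose proof (small_inside_cube B C HBC s1 C1) as Hs1.
    pose proof (small_inside_cube B C HBC s2 C2) as Hs2.
    destruct s1 as [[x1 y1] z1], s2 as [[x2 y2] z2].
    unfold block_sub, cube, in_block in *; simpl in *.
    destruct (Z_lt_le_dec (bx2 B) (Z.of_nat l)) as [Hright | Hleft].
    + destruct (small_cluster_extend B C _ (add (x2, y2, z2) (1, 0, 0)) HBC C2) as [H [C' [HH [HCH Hs']]]].
      { exists (1,0,0). split; [now left | reflexivity]. }
      { apply Hcover. unfold in_block; simpl. lia. }
      exists H, C'. split; [exact HH|].
      pose proof (HCH _ C1). unfold in_block in *; simpl in *. lia.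
    + destruct (small_cluster_extend B C _ (add (x1, y1, z1) (-1, 0, 0)) HBC C1) as [H [C' [HH [HCH Hs']]]].
      { exists (-1,0,0). split; [right; now left | reflexivity]. }
      { apply Hcover. unfold in_block; simpl. lia. }
      exists H, C'. split; [exact HH|].
      pose proof (HCH _ C2). unfold in_block in *; simpl in *. lia.
Qed.

End Small.
End Clusters.
End Bootstrap.

Theorem lemma1 (a b c : nat) (Ha : (1 <= a)%nat) (Hab : (a <= b)%nat) (Hbc : (b <= c)%nat) :
  exists kappa lambda : nat, (1 <= kappa)%nat /\
  forall (A : site -> Prop) (l : nat),
    internally_spanned a b c A (cube l) ->
    forall k : nat, (1 <= k)%nat -> (kappa * k + lambda <= l)%nat ->
    exists B : block,
      valid_block B /\ block_sub B (cube l) /\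
      (Z.of_nat k <= longest_side B <= Z.of_nat (kappa * k + lambda))%Z /\
      weakly_crossed a b c A B.
Proof.
  exists 2%nat, (2 * c)%nat. split; [lia|].
  intros A l Hspan k _ Hl. apply NNPP. intros Hnone.
  assert (Hcover : forall s, in_block (cube l) s -> covered a b c A l k s).
  { intros s Hs. apply (closure_covered a b c Ha Hab Hbc A l k Hnone). exact (Hspan s Hs). }
  destruct (small_cluster_of_width a b c Ha Hab Hbc A l k Hnone Hl Hcover k (le_n k))
    as [B [C [[_ Hside] Hwidth]]].
  pose proof (width_le_longest_side B). lia.
Qed.
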